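(* A thermostat $(M,g,\lambda)$ has no conjugate points if and only if for every $v\in SM$, every $T>0$ and every piecewise $\mathcal{C}^2$ function $f:[-T,T]\to\mathbb{R}$ with $f(-T)=f(T)=0$, one has $I_v(f)\ge0$, with equality if and only if $f\equiv0$.
   Context: Setup: $(M,g)$ closed oriented Riemannian surface, $\pi:SM\to M$ its unit tangent bundle, $\lambda\in\mathcal{C}^\infty(SM,\mathbb{R})$, thermostat flow $\varphi_t$ on $SM$ (flow of unit-speed curves with $\nabla_{\dot\gamma}\dot\gamma=\lambda(\gamma,\dot\gamma)J\dot\gamma$), generator $F=X+\lambda V$ with $X$ geodesic vector field, $V$ vertical vector field, $H:=[V,X]$. Exponential map $\exp^\lambda_x(tv):=\pi(\varphi_t(x,v))$, $t\ge0$; the thermostat has no conjugate points if every $\exp^\lambda_x$ is a local diffeomorphism of $T_xM$. Thermostat curvature $\mathbb{K}:=\pi^*K_g-H\lambda+\lambda^2+F(V\lambda)$ ($K_g$ Gaussian curvature), damped thermostat curvature $\tilde\kappa:=\mathbb{K}-\tfrac12F(V\lambda)-\tfrac14(V\lambda)^2$, $\tilde\kappa_v(t):=\tilde\kappa(\varphi_t(v))$. Index form: $I_v(f):=\int_{-T}^T(\dot f^2-\tilde\kappa_v f^2)\,dt$. Known fact (may be used): the thermostat has no conjugate points iff for every $v\in SM$ every non-trivial solution of $\ddot z+\tilde\kappa_v(t)z=0$ on $\mathbb{R}$ vanishes at most once. *)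

From Stdlib Require Import Reals.
From Coquelicot Require Import Coquelicot.
Open Scope R_scope.

(* Abstraction of the thermostat: only the damped thermostat curvature along
   orbits enters the statement.  For v in SM, [kappa v t] stands for
   tilde-kappa_v(t) = tilde-kappa(phi_t(v)). *)

Definition jacobi_solution (k : R -> R) (z z1 z2 : R -> R) : Prop :=
  forall t, is_derive z t (z1 t) /\ is_derive z1 t (z2 t) /\ z2 t + k t * z t = 0.

(* No conjugate points, via the known characterization given in the context:
   for every v, every non-trivial solution of z'' + kappa_v z = 0 on R
   vanishes at most once. *)
Definition no_conjugate_points {SM : Type} (kappa : SM -> R -> R) : Prop :=
  forall (v : SM) (z z1 z2 : R -> R),
    jacobi_solution (kappa v) z z1 z2 ->
    (exists t, z t <> 0) ->
    forall t1 t2, z t1 = 0 -> z t2 = 0 -> t1 = t2.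

Definition C2_with (g g1 g2 : R -> R) : Prop :=
  forall x, is_derive g x (g1 x) /\ is_derive g1 x (g2 x) /\ continuous g2 x.

(* Representation of a piecewise C^2 function f on [-T,T]: a partition
   -T = t 0 < t 1 < ... < t n = T and C^2 functions g i (with derivatives
   g1 i, g2 i) such that f = g i on [t i, t (i+1)].  (A C^2 function on a
   closed interval always extends to a C^2 function on R.) *)
Definition pw_C2_rep (T : R) (f : R -> R) (n : nat) (t : nat -> R)
  (g g1 g2 : nat -> R -> R) : Prop :=
  (0 < n)%nat /\ t O = - T /\ t n = T /\
  (forall i, (i < n)%nat -> t i < t (S i)) /\
  (forall i, (i < n)%nat -> C2_with (g i) (g1 i) (g2 i)) /\
  (forall i, (i < n)%nat -> forall x, t i <= x <= t (S i) -> f x = g i x).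

Fixpoint sum_lt (n : nat) (a : nat -> R) : R :=
  match n with O => 0 | S m => sum_lt m a + a m end.

Definition index_form (k : R -> R) (n : nat) (t : nat -> R)
  (g g1 : nat -> R -> R) : R :=
  sum_lt n (fun i => RInt (fun s => (g1 i s) ^ 2 - k s * (g i s) ^ 2) (t i) (t (S i))).

From Stdlib Require Import Reals Lra Lia Psatz Factorial Classical.
From Coquelicot Require Import Coquelicot.
Open Scope R_scope.

(* Picone's identity: where a solution z of z'' + k z = 0 does not vanish,
     f'^2 - k f^2 = (f' - f z'/z)^2 + (f^2 z'/z)'.
   If there are no conjugate points, the solution with z(-T-1) = 0, z'(-T-1) = 1
   has no zero on [-T, T]; integrating Picone's identity piece by piece, the boundary
   terms telescope to f(T)^2 z'(T)/z(T) - f(-T)^2 z'(-T)/z(-T) = 0, so the index form is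
   a sum of integrals of squares, and it vanishes only if f' = f z'/z, i.e. f is a
   multiple of z on each piece, hence f = 0 since f(-T) = 0.
   Conversely, a solution vanishing at t1 < t2, extended by 0 outside [t1, t2], has index
   form [z z']_{t1}^{t2} = 0, so it vanishes on ]t1, t2[; then z = z' = 0 at an interior
   point and z = 0 by uniqueness (a Gronwall estimate on z^2 + z'^2). *)

(* [auto_derive], with the side conditions and the [Derive] terms discharged by the
   [is_derive] hypotheses in the context. *)
Ltac auto_derive_hyps :=
  auto_derive;
  [ repeat split; try (eexists; eassumption); try assumption
  | repeat match goal with |- context [Derive ?F ?y] =>
      match goal with H : is_derive _ _ ?l |- _ =>
        replace (Derive F y) with l by (symmetry; apply is_derive_unique; exact H) end end;
    match goal with |- ?a = ?b => change (@eq R a b) end ].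

Lemma sum_lt_ext n (a b : nat -> R) :
  (forall i, (i < n)%nat -> a i = b i) -> sum_lt n a = sum_lt n b.
Proof.
  induction n as [|n IH]; intros Hab; simpl; [reflexivity|].
  rewrite IH, Hab; auto with arith.
Qed.

Lemma sum_lt_telescope n (a b : nat -> R) :
  sum_lt n (fun i => a i + (b (S i) - b i)) = sum_lt n a + b n - b O.
Proof. induction n as [|n IH]; simpl; [|rewrite IH]; ring. Qed.

Lemma sum_lt_ge0 n (a : nat -> R) :
  (forall i, (i < n)%nat -> 0 <= a i) -> 0 <= sum_lt n a.
Proof.
  induction n as [|n IH]; intros Ha; simpl; [lra|].
  assert (0 <= a n) by auto. assert (0 <= sum_lt n a) by auto. lra.
Qed.

Lemma sum_lt_eq0_ge0 n (a : nat -> R) :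
  (forall i, (i < n)%nat -> 0 <= a i) -> sum_lt n a = 0 ->
  forall i, (i < n)%nat -> a i = 0.
Proof.
  induction n as [|n IH]; intros Ha Hsum i Hi; simpl in Hsum; [lia|].
  assert (0 <= a n) by auto. assert (0 <= sum_lt n a) by (apply sum_lt_ge0; auto).
  destruct (Nat.eq_dec i n) as [->|Hin]; [lra|].
  apply IH; auto; [lra|lia].
Qed.

Lemma sum_lt_eq0 n (a : nat -> R) :
  (forall i, (i < n)%nat -> a i = 0) -> sum_lt n a = 0.
Proof.
  induction n as [|n IH]; intros Ha; simpl; [reflexivity|].
  rewrite IH, Ha; auto; ring.
Qed.

Lemma partition_bounded T n (t : nat -> R) :
  t O = - T -> t n = T -> (forall i, (i < n)%nat -> t i < t (S i)) ->
  forall i, (i <= n)%nat -> - T <= t i <= T.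
Proof.
  intros t0 tn incr.
  assert (lower : forall i, (i <= n)%nat -> - T <= t i).
  { induction i; intros; [lra|]. assert (t i < t (S i)) by auto with arith.
    assert (- T <= t i) by auto with arith. lra. }
  assert (upper : forall j i, (i + j = n)%nat -> t i <= T).
  { induction j; intros i Hij.
    - replace i with n by lia. lra.
    - assert (t i < t (S i)) by (apply incr; lia).
      assert (t (S i) <= T) by (apply IHj; lia). lra. }
  intros i Hi. split; [auto|]. apply (upper (n - i)%nat); lia.
Qed.

Lemma partition_cover n (t : nat -> R) :
  (forall i, (i < n)%nat -> t i < t (S i)) -> (0 < n)%nat ->
  forall x, t O <= x <= t n -> exists i, (i < n)%nat /\ t i <= x <= t (S i).
Proof.
  intros incr. induction n as [|n IH]; intros Hn x Hx; [lia|].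
  destruct (Nat.eq_dec n 0) as [->|Hn0]; [exists O; split; [lia|lra]|].
  destruct (Rle_dec x (t n)) as [Hxn|Hxn].
  - destruct (IH (fun i Hi => incr i (Nat.lt_lt_succ_r _ _ Hi)) ltac:(lia) x ltac:(lra))
      as [i [Hi Hxi]].
    exists i. split; [lia|exact Hxi].
  - exists n. split; [lia|lra].
Qed.

Lemma continuous_of_is_derive (f : R -> R) (x l : R) : is_derive f x l -> continuous f x.
Proof.
  intros Hf. apply (ex_derive_continuous (K := R_AbsRing) (V := R_NormedModule)).
  exists l; exact Hf.
Qed.

Lemma ex_RInt_continuous_on (f : R -> R) a b :
  a <= b -> (forall x, a <= x <= b -> continuous f x) -> ex_RInt f a b.
Proof.
  intros Hab Hf. apply (ex_RInt_continuous (V := R_CompleteNormedModule)). intros x.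
  rewrite Rmin_left, Rmax_right by exact Hab. apply Hf.
Qed.

Lemma is_derive_eq0_open (g : R -> R) lo hi s l :
  (forall y, lo < y < hi -> g y = 0) -> lo < s < hi -> is_derive g s l -> l = 0.
Proof.
  intros Hg Hs Hd.
  assert (Hd0 : is_derive g s 0).
  { apply (is_derive_ext_loc (fun _ => 0)); [|exact (is_derive_const (K := R_AbsRing) 0 s)].
    apply (locally_interval _ s lo hi); try apply Hs. simpl; intros y Hlo Hhi.
    symmetry; apply Hg; lra. }
  apply is_derive_unique in Hd, Hd0. congruence.
Qed.

Lemma RInt_ge0_eq0 (Q : R -> R) lo hi :
  (forall x, lo <= x <= hi -> continuous Q x) -> (forall x, lo <= x <= hi -> 0 <= Q x) ->
  RInt Q lo hi = 0 -> forall x, lo < x < hi -> Q x = 0.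
Proof.
  intros HQc HQ0 HQint x Hx.
  set (F := fun b => RInt Q lo b).
  assert (ex_Q : forall a b, lo <= a -> a <= b -> b <= hi -> ex_RInt Q a b).
  { intros a b Ha Hab Hb. apply ex_RInt_continuous_on; [lra|]. intros; apply HQc; lra. }
  assert (RInt_Q_ge0 : forall a b, lo <= a -> a <= b -> b <= hi -> 0 <= RInt Q a b).
  { intros a b Ha Hab Hb. apply RInt_ge_0; auto. intros; apply HQ0; lra. }
  (* [F] is nondecreasing on [lo, hi] and vanishes at both ends. *)
  assert (F_eq0 : forall y, lo < y < hi -> F y = 0).
  { intros y Hy. unfold F.
    pose proof (RInt_Chasles Q lo y hi (ex_Q lo y ltac:(lra) ltac:(lra) ltac:(lra))
                     (ex_Q y hi ltac:(lra) ltac:(lra) ltac:(lra))) as Hsplit.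
    pose proof (RInt_Q_ge0 lo y ltac:(lra) ltac:(lra) ltac:(lra)).
    pose proof (RInt_Q_ge0 y hi ltac:(lra) ltac:(lra) ltac:(lra)).
    change (RInt Q lo y + RInt Q y hi = RInt Q lo hi) in Hsplit. lra. }
  apply (is_derive_eq0_open F lo hi x); auto.
  apply (is_derive_RInt Q F lo); [|apply HQc; lra].
  apply (locally_interval _ x lo hi); try apply Hx. simpl; intros y Hlo Hhi.
  apply (RInt_correct (V := R_CompleteNormedModule)), ex_Q; lra.
Qed.

Lemma is_derive0_const (h : R -> R) lo hi :
  (forall x, lo < x < hi -> is_derive h x 0) -> (forall x, lo <= x <= hi -> continuous h x) ->
  forall x, lo <= x <= hi -> h x = h lo.
Proof.
  intros Hd Hc x Hx.
  destruct (Req_dec x lo) as [->|Hxlo]; [reflexivity|].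
  destruct (MVT_gen h lo x (fun _ => 0)) as [c [_ Hmvt]].
  - rewrite Rmin_left, Rmax_right by lra. intros y Hy. apply Hd; lra.
  - rewrite Rmin_left, Rmax_right by lra. intros y Hy.
    apply continuity_pt_filterlim, Hc; lra.
  - lra.
Qed.

Lemma is_derive_RInt_continuous (f : R -> R) a x : (forall s, continuous f s) ->
  is_derive (fun t => RInt f a t) x (f x).
Proof.
  intros Hf. apply (is_derive_RInt (V := R_CompleteNormedModule) f _ a); [|apply Hf].
  exists (mkposreal 1 Rlt_0_1). intros y _.
  apply (RInt_correct (V := R_CompleteNormedModule)).
  apply (ex_RInt_continuous (V := R_CompleteNormedModule)). intros; apply Hf.
Qed.

(** * Picone's identity *)

Definition picone_square (z z1 g g1 : R -> R) (s : R) : R := (g1 s - g s * z1 s / z s) ^ 2.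

Section Picone.

Variables (k z z1 z2 g g1 g2 : R -> R).
Hypothesis k_cont : forall s, continuous k s.
Hypothesis z_sol : jacobi_solution k z z1 z2.
Hypothesis g_C2 : C2_with g g1 g2.

Lemma continuous_picone_square s : z s <> 0 -> continuous (picone_square z z1 g g1) s.
Proof.
  intros zs. destruct (z_sol s) as [Dz [Dz1 _]]. destruct (g_C2 s) as [Dg [Dg1 _]].
  apply (ex_derive_continuous (K := R_AbsRing) (V := R_NormedModule)).
  unfold picone_square. auto_derive. repeat split; try (eexists; eassumption); assumption.
Qed.

Lemma picone_identity lo hi : lo <= hi -> (forall s, lo <= s <= hi -> z s <> 0) ->
  RInt (fun s => g1 s ^ 2 - k s * g s ^ 2) lo hi =
  RInt (picone_square z z1 g g1) lo hi + (g hi ^ 2 * z1 hi / z hi - g lo ^ 2 * z1 lo / z lo).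
Proof.
  intros Hlh nz.
  set (Q := picone_square z z1 g g1).
  set (D := fun s => g1 s ^ 2 - k s * g s ^ 2 - Q s).
  assert (DP : forall s, lo <= s <= hi -> is_derive (fun s => g s ^ 2 * z1 s / z s) s (D s)).
  { intros s Hs. pose proof (nz s Hs) as zs.
    destruct (z_sol s) as [Dz [Dz1 Ez]]. destruct (g_C2 s) as [Dg _].
    auto_derive_hyps. unfold D, Q, picone_square.
    replace (z2 s) with (- k s * z s) by lra. field. exact zs. }
  assert (CD : forall s, lo <= s <= hi -> continuous D s).
  { intros s Hs. destruct (g_C2 s) as [Dg [Dg1 _]]. unfold D.
    apply (continuous_minus (V := R_NormedModule) (fun s => g1 s ^ 2 - k s * g s ^ 2) Q);
      [apply (continuous_minus (V := R_NormedModule))|apply continuous_picone_square, nz, Hs].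
    - apply (continuous_of_is_derive _ s (2 * g2 s * g1 s)). auto_derive_hyps. ring.
    - apply (continuous_mult (K := R_AbsRing)); [apply k_cont|].
      apply (continuous_of_is_derive _ s (2 * g1 s * g s)). auto_derive_hyps. ring. }
  assert (IQ : is_RInt Q lo hi (RInt Q lo hi)).
  { apply (RInt_correct (V := R_CompleteNormedModule)), ex_RInt_continuous_on; [exact Hlh|].
    intros s Hs. apply continuous_picone_square, nz, Hs. }
  assert (ID : is_RInt D lo hi (g hi ^ 2 * z1 hi / z hi - g lo ^ 2 * z1 lo / z lo)).
  { apply (is_RInt_derive (fun s => g s ^ 2 * z1 s / z s));
      rewrite Rmin_left, Rmax_right by exact Hlh; auto. }
  apply is_RInt_unique, (is_RInt_ext (fun s => Q s + D s)).
  - intros s _. unfold D.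
    change (Q s + (g1 s ^ 2 - k s * g s ^ 2 - Q s) = g1 s ^ 2 - k s * g s ^ 2). ring.
  - exact (is_RInt_plus _ _ _ _ _ _ IQ ID).
Qed.

Lemma RInt_picone_square_ge0 lo hi : lo <= hi -> (forall s, lo <= s <= hi -> z s <> 0) ->
  0 <= RInt (picone_square z z1 g g1) lo hi.
Proof.
  intros Hlh nz. apply RInt_ge_0; [exact Hlh| |intros; apply pow2_ge_0].
  apply ex_RInt_continuous_on; [exact Hlh|]. intros s Hs. apply continuous_picone_square, nz, Hs.
Qed.

Lemma picone_square_eq0 lo hi : lo <= hi -> (forall s, lo <= s <= hi -> z s <> 0) ->
  RInt (picone_square z z1 g g1) lo hi = 0 -> g lo = 0 -> forall x, lo <= x <= hi -> g x = 0.
Proof.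
  intros Hlh nz HQ glo x Hx.
  assert (Q0 : forall s, lo < s < hi -> picone_square z z1 g g1 s = 0).
  { apply RInt_ge0_eq0; auto; [|intros; apply pow2_ge_0].
    intros s Hs. apply continuous_picone_square, nz, Hs. }
  assert (ratio_derive : forall s, lo <= s <= hi ->
            is_derive (fun s => g s / z s) s ((g1 s - g s * z1 s / z s) / z s)).
  { intros s Hs. pose proof (nz s Hs) as zs.
    destruct (z_sol s) as [Dz _]. destruct (g_C2 s) as [Dg _].
    auto_derive_hyps. field. exact zs. }
  assert (ratio_const : g x / z x = g lo / z lo).
  { apply (is_derive0_const (fun s => g s / z s) lo hi); auto.
    - intros s Hs. replace 0 with ((g1 s - g s * z1 s / z s) / z s); [apply ratio_derive; lra|].
      pose proof (Q0 s Hs) as Qs. unfold picone_square in Qs.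
      assert (Hs0 : g1 s - g s * z1 s / z s = 0) by nra. rewrite Hs0. unfold Rdiv. ring.
    - intros s Hs. exact (continuous_of_is_derive _ _ _ (ratio_derive s Hs)). }
  pose proof (nz x Hx).
  replace (g x) with (g x / z x * z x) by (field; assumption).
  rewrite ratio_const, glo. unfold Rdiv. ring.
Qed.

End Picone.

(** * Uniqueness for the Jacobi equation *)

Lemma continuous_bounded (k : R -> R) a b : (forall s, continuous k s) ->
  exists M, 0 <= M /\ forall s, a <= s <= b -> Rabs (k s) <= M.
Proof.
  intros Hk. destruct (Rle_lt_dec a b) as [Hab|Hab].
  - destruct (continuity_ab_maj (fun s => Rabs (k s)) a b Hab) as [sM [HsM _]].
    { intros s _. apply continuity_pt_filterlim, continuous_Rabs_comp, Hk. }
    exists (Rabs (k sM)). split; [apply Rabs_pos|exact HsM].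
  - exists 0. split; [lra|]. intros s Hs. lra.
Qed.

Lemma continuous_bounded_abs (k : R -> R) L : (forall s, continuous k s) ->
  exists M, 0 <= M /\ forall s, Rabs s <= L -> Rabs (k s) <= M.
Proof.
  intros Hk. destruct (continuous_bounded k (- L) L Hk) as [M [M0 HM]].
  exists M. split; [exact M0|]. intros s Hs. apply HM, Rabs_le_between, Hs.
Qed.

Lemma gronwall_eq0_fwd (E dE : R -> R) a b C : a <= b ->
  (forall s, a <= s <= b -> is_derive E s (dE s)) -> (forall s, a <= s <= b -> dE s <= C * E s) ->
  (forall s, a <= s <= b -> 0 <= E s) -> E a = 0 -> E b = 0.
Proof.
  intros Hab DE HdE HE Ea.
  assert (Dh : forall s, a <= s <= b ->
             is_derive (fun s => E s * exp (- C * s)) s ((dE s - C * E s) * exp (- C * s))).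
  { intros s Hs. pose proof (DE s Hs). auto_derive_hyps. ring. }
  destruct (MVT_gen (fun s => E s * exp (- C * s)) a b (fun s => (dE s - C * E s) * exp (- C * s)))
    as [c [Hc Hmvt]]; rewrite ?Rmin_left, ?Rmax_right in * by exact Hab.
  - intros s Hs. apply Dh. lra.
  - intros s Hs. apply continuity_pt_filterlim, (continuous_of_is_derive _ _ _ (Dh s Hs)).
  - rewrite Ea, Rmult_0_l in Hmvt.
    assert (dE c - C * E c <= 0) by (pose proof (HdE c Hc); lra).
    assert (0 <= E b) by (apply HE; lra).
    pose proof (exp_pos (- C * c)). pose proof (exp_pos (- C * b)).
    assert ((dE c - C * E c) * exp (- C * c) <= 0) by nra.
    assert (E b * exp (- C * b) <= 0) by nra.
    nra.
Qed.

Lemma gronwall_eq0 (E dE : R -> R) a b C :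
  (forall s, Rmin a b <= s <= Rmax a b -> is_derive E s (dE s)) ->
  (forall s, Rmin a b <= s <= Rmax a b -> Rabs (dE s) <= C * E s) ->
  (forall s, Rmin a b <= s <= Rmax a b -> 0 <= E s) -> E a = 0 -> E b = 0.
Proof.
  intros DE HdE HE Ea. destruct (Rle_lt_dec a b) as [Hab|Hab].
  - rewrite Rmin_left, Rmax_right in * by exact Hab.
    apply (gronwall_eq0_fwd E dE a b C); auto.
    intros s Hs. pose proof (HdE s Hs). pose proof (Rle_abs (dE s)). lra.
  - rewrite Rmin_right, Rmax_left in * by lra.
    replace b with (- - b) by ring.
    apply (gronwall_eq0_fwd (fun s => E (- s)) (fun s => - dE (- s)) (- a) (- b) C); try lra.
    + intros s Hs. pose proof (DE (- s) ltac:(lra)). auto_derive_hyps. ring.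
    + intros s Hs. pose proof (HdE (- s) ltac:(lra)). pose proof (Rle_abs (- dE (- s))).
      rewrite Rabs_Ropp in *. lra.
    + intros s Hs. apply HE. lra.
    + rewrite Ropp_involutive. exact Ea.
Qed.

Lemma jacobi_solution_eq0 (k z z1 z2 : R -> R) m : (forall s, continuous k s) ->
  jacobi_solution k z z1 z2 -> z m = 0 -> z1 m = 0 -> forall t, z t = 0.
Proof.
  intros Hk Hz zm z1m t.
  destruct (continuous_bounded k (Rmin m t) (Rmax m t) Hk) as [M [M0 HM]].
  set (E := fun s => z s ^ 2 + z1 s ^ 2).
  assert (Et : E t = 0).
  { apply (gronwall_eq0 E (fun s => 2 * z s * z1 s * (1 - k s)) m t (1 + M)).
    - intros s _. destruct (Hz s) as [Dz [Dz1 Ez]]. unfold E. auto_derive_hyps.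
      replace (z2 s) with (- k s * z s) by lra. ring.
    - intros s Hs. pose proof (HM s Hs). unfold E.
      rewrite !Rabs_mult, (Rabs_right 2) by lra.
      assert (Rabs (1 - k s) <= 1 + M).
      { unfold Rminus. eapply Rle_trans; [apply Rabs_triang|]. rewrite Rabs_Ropp, Rabs_R1. lra. }
      assert (2 * Rabs (z s) * Rabs (z1 s) <= z s ^ 2 + z1 s ^ 2).
      { rewrite <- (pow2_abs (z s)), <- (pow2_abs (z1 s)).
        pose proof (pow2_ge_0 (Rabs (z s) - Rabs (z1 s))). nra. }
      pose proof (Rabs_pos (z s)). pose proof (Rabs_pos (z1 s)). pose proof (Rabs_pos (1 - k s)).
      nra.
    - intros s _. unfold E. pose proof (pow2_ge_0 (z s)). pose proof (pow2_ge_0 (z1 s)). lra.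
    - unfold E. rewrite zm, z1m. ring. }
  unfold E in Et. pose proof (pow2_ge_0 (z t)). pose proof (pow2_ge_0 (z1 t)). nra.
Qed.

(** * Existence by Picard iteration *)

Lemma Un_cv_Series (a : nat -> R) : ex_series a -> Un_cv (sum_f_R0 a) (Series a).
Proof. intros Ha. apply is_series_Reals, Series_correct, Ha. Qed.

Lemma is_derive_Series (f df : nat -> R -> R) (A : nat -> R) (r : posreal) (x : R) :
  (forall n y, is_derive (f n) y (df n y)) -> (forall y, ex_series (fun n => f n y)) ->
  ex_series A -> (forall n y, Rabs y < r -> Rabs (df n y) <= A n) -> Rabs x < r ->
  is_derive (fun y => Series (fun n => f n y)) x (Series (fun n => df n x)).
Proof.
  intros Df exf exA HA Hx.
  assert (exA_abs : ex_series (fun n => Rabs (A n))).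
  { apply (ex_series_ext A); [|exact exA]. intros n. symmetry. apply Rabs_pos_eq.
    apply Rle_trans with (Rabs (df n 0)); [apply Rabs_pos|apply HA].
    rewrite Rabs_R0. apply cond_pos. }
  assert (CVN : CVN_r df r).
  { exists A, (Series (fun n => Rabs (A n))). split; [apply Un_cv_Series, exA_abs|].
    intros n y Hy. apply HA. unfold Boule in Hy. rewrite Rminus_0_r in Hy. exact Hy. }
  destruct (CVN_CVU_r df r CVN x Hx) as [e He].
  apply is_derive_Reals, (CVU_derivable (SP f) (SP df) _ _ x e He).
  - intros y _. apply Un_cv_Series, exf.
  - intros n y _. apply is_derive_Reals. induction n as [|n IH]; unfold SP in *; simpl.
    + apply Df.
    + apply (is_derive_plus (fun y => sum_f_R0 (fun k => f k y) n) (f (S n))); [exact IH|apply Df].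
  - unfold Boule. rewrite Rminus_diag, Rabs_R0. apply cond_pos.
Qed.

Definition exp_term (q : R) (n : nat) : R := q ^ n / INR (fact n).

Lemma ex_series_exp_term q : ex_series (exp_term q).
Proof.
  exists (exp q). eapply is_series_ext; [|exact (is_exp_Reals q)].
  intros n. unfold exp_term, scal; simpl; unfold mult; simpl. rewrite pow_n_pow. reflexivity.
Qed.

Lemma abs_RInt_pow_le_pos (h : R -> R) C m t : 0 <= t -> (forall s, continuous h s) ->
  (forall s, 0 <= s <= t -> Rabs (h s) <= C * s ^ m) ->
  Rabs (RInt h 0 t) <= C * t ^ S m / INR (S m).
Proof.
  intros Ht Hh Hbound.
  assert (I_pow : is_RInt (fun s => C * s ^ m) 0 t (C * t ^ S m / INR (S m))).
  { replace (C * t ^ S m / INR (S m)) with (C * t ^ S m / INR (S m) - C * 0 ^ S m / INR (S m))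
      by (rewrite pow_i by lia; unfold Rdiv; ring).
    apply (is_RInt_derive (V := R_CompleteNormedModule) (fun s => C * s ^ S m / INR (S m))).
    - intros s _. auto_derive; [exact I|]. field. apply (not_0_INR (S m)). lia.
    - intros s _. apply (continuous_of_is_derive _ s (C * (INR m * s ^ pred m))).
      auto_derive; [exact I|]. ring. }
  rewrite <- (is_RInt_unique _ _ _ _ I_pow).
  eapply Rle_trans; [apply abs_RInt_le; [exact Ht|]|].
  - apply ex_RInt_continuous_on; auto.
  - apply RInt_le; [exact Ht| | |intros; apply Hbound; lra].
    + apply ex_RInt_continuous_on; [exact Ht|]. intros s _. apply continuous_Rabs_comp, Hh.
    + eexists; exact I_pow.
Qed.

Lemma abs_RInt_pow_le (h : R -> R) C m t : (forall s, continuous h s) ->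
  (forall s, Rabs s <= Rabs t -> Rabs (h s) <= C * Rabs s ^ m) ->
  Rabs (RInt h 0 t) <= C * Rabs t ^ S m / INR (S m).
Proof.
  intros Hh Hbound. destruct (Rle_lt_dec 0 t) as [Ht|Ht].
  - rewrite (Rabs_pos_eq t) by exact Ht. apply abs_RInt_pow_le_pos; auto.
    intros s Hs. replace (s ^ m) with (Rabs s ^ m) by (rewrite Rabs_pos_eq; lra).
    apply Hbound. rewrite !Rabs_pos_eq; lra.
  - assert (reflect : RInt h 0 t = RInt (fun y => - h (- y)) 0 (- t)).
    { symmetry. apply is_RInt_unique.
      apply (is_RInt_comp_opp (V := R_NormedModule) h 0 (- t)).
      rewrite Ropp_0, Ropp_involutive.
      apply (RInt_correct (V := R_CompleteNormedModule)).
      apply (ex_RInt_continuous (V := R_CompleteNormedModule)).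
      intros; apply Hh. }
    rewrite reflect, (Rabs_left t) by exact Ht. apply abs_RInt_pow_le_pos; [lra| |].
    + intros s. apply (continuous_opp (V := R_NormedModule) (fun y => h (- y))).
      apply (continuous_comp (fun y => - y) h); [|apply Hh].
      apply (continuous_opp (V := R_NormedModule)), continuous_id.
    + intros s Hs. rewrite Rabs_Ropp.
      replace (s ^ m) with (Rabs (- s) ^ m) by (rewrite Rabs_Ropp, Rabs_pos_eq; lra).
      apply Hbound. rewrite Rabs_Ropp, Rabs_pos_eq, Rabs_left; lra.
Qed.

Section Picard.

Variable k : R -> R.
Hypothesis k_cont : forall s, continuous k s.

(* [picard n] is the pair (u_n, u_n') with u_0 t = t and u_(n+1)'' = - k u_n,
   u_(n+1)(0) = u_(n+1)'(0) = 0, so that sum_n u_n solves z'' + k z = 0, z(0) = 0, z'(0) = 1. *)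
Fixpoint picard (n : nat) : (R -> R) * (R -> R) :=
  match n with
  | O => (fun t => t, fun _ => 1)
  | S m => let du := fun t => - RInt (fun s => k s * fst (picard m) s) 0 t in
           (fun t => RInt du 0 t, du)
  end.

Definition picard_u n := fst (picard n).
Definition picard_du n := snd (picard n).
Definition picard_ddu n t := match n with O => 0 | S m => - (k t * picard_u m t) end.

Lemma is_derive_picard n t :
  is_derive (picard_u n) t (picard_du n t) /\ is_derive (picard_du n) t (picard_ddu n t).
Proof.
  revert t. induction n as [|n IH]; intros t.
  - split; [exact (is_derive_id (K := R_AbsRing) t)|exact (is_derive_const (K := R_AbsRing) 1 t)].
  - assert (Ddu : forall s, is_derive (picard_du (S n)) s (picard_ddu (S n) s)).
    { intros s. apply (is_derive_opp (K := R_AbsRing) (V := R_NormedModule)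
                         (fun t => RInt (fun s => k s * picard_u n s) 0 t)).
      apply (is_derive_RInt_continuous (fun r => k r * picard_u n r)). intros r.
      apply (continuous_mult (K := R_AbsRing)); [apply k_cont|].
      exact (continuous_of_is_derive _ _ _ (proj1 (IH r))). }
    split; [|apply Ddu].
    apply is_derive_RInt_continuous. intros s. exact (continuous_of_is_derive _ _ _ (Ddu s)).
Qed.

Lemma picard_at0 n : picard_u n 0 = 0 /\ picard_du n 0 = match n with O => 1 | S _ => 0 end.
Proof.
  destruct n; [split; reflexivity|].
  unfold picard_u, picard_du; simpl. rewrite !(RInt_point (V := R_CompleteNormedModule)).
  split; [reflexivity|]. change (- (0 : R) = 0). ring.
Qed.

Lemma picard_bound L M : 0 <= M -> (forall s, Rabs s <= L -> Rabs (k s) <= M) ->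
  forall n t, Rabs t <= L ->
  Rabs (picard_u n t) <= M ^ n * Rabs t ^ S (2 * n) / INR (fact (S (2 * n))) /\
  Rabs (picard_du n t) <= M ^ n * Rabs t ^ (2 * n) / INR (fact (2 * n)).
Proof.
  intros M0 HM n. induction n as [|n IH]; intros t Ht.
  - unfold picard_u, picard_du; simpl. rewrite Rabs_R1. split; lra.
  - assert (fact_step : forall j, INR (fact (S j)) = INR (S j) * INR (fact j)).
    { intros j. rewrite <- mult_INR. reflexivity. }
    assert (Bdu : forall t, Rabs t <= L ->
              Rabs (picard_du (S n) t) <= M ^ S n * Rabs t ^ (2 * S n) / INR (fact (2 * S n))).
    { intros s Hs. unfold picard_du; simpl snd. rewrite Rabs_Ropp.
      replace (2 * S n)%nat with (S (S (2 * n))) by lia.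
      eapply Rle_trans.
      { apply (abs_RInt_pow_le _ (M ^ S n / INR (fact (S (2 * n))))).
        - intros r. apply (continuous_mult (K := R_AbsRing)); [apply k_cont|].
          exact (continuous_of_is_derive _ _ _ (proj1 (is_derive_picard n r))).
        - intros r Hr. rewrite Rabs_mult. destruct (IH r ltac:(lra)) as [IHu _].
          replace (M ^ S n / INR (fact (S (2 * n))) * Rabs r ^ S (2 * n))
            with (M * (M ^ n * Rabs r ^ S (2 * n) / INR (fact (S (2 * n)))))
            by (change (M ^ S n) with (M * M ^ n); unfold Rdiv; ring).
          apply Rmult_le_compat; auto using Rabs_pos. apply HM. lra. }
      right. rewrite (fact_step (S (2 * n))). field.
      split; [apply INR_fact_neq_0|apply (not_0_INR (S (S (2 * n)))); lia]. }
    split; [|apply Bdu; exact Ht].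
    unfold picard_u; simpl fst.
    replace (S (2 * S n)) with (S (S (S (2 * n)))) by lia.
    eapply Rle_trans.
    { apply (abs_RInt_pow_le _ (M ^ S n / INR (fact (2 * S n)))).
      - intros s. exact (continuous_of_is_derive _ _ _ (proj2 (is_derive_picard (S n) s))).
      - intros s Hs. fold (picard_du (S n)).
        replace (M ^ S n / INR (fact (2 * S n)) * Rabs s ^ (2 * S n))
          with (M ^ S n * Rabs s ^ (2 * S n) / INR (fact (2 * S n))) by (unfold Rdiv; ring).
        apply Bdu. lra. }
    right. replace (2 * S n)%nat with (S (S (2 * n))) by lia.
    rewrite (fact_step (S (S (2 * n)))). field.
    split; [apply INR_fact_neq_0|apply (not_0_INR (S (S (S (2 * n))))); lia].
Qed.

Lemma picard_majorant L M : 0 <= L -> 0 <= M -> (forall s, Rabs s <= L -> Rabs (k s) <= M) ->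
  forall n t, Rabs t <= L ->
  Rabs (picard_u n t) <= L * exp_term (M * L ^ 2) n /\
  Rabs (picard_du n t) <= exp_term (M * L ^ 2) n.
Proof.
  intros L0 M0 HM n t Ht. destruct (picard_bound L M M0 HM n t Ht) as [Bu Bdu].
  assert (Bfact : forall j, (n <= j)%nat ->
            M ^ n * Rabs t ^ (2 * n) / INR (fact j) <= exp_term (M * L ^ 2) n).
  { intros j Hj. unfold exp_term, Rdiv. rewrite Rpow_mult_distr, <- pow_mult.
    apply Rmult_le_compat.
    - apply Rmult_le_pos; apply pow_le; [exact M0|apply Rabs_pos].
    - apply Rlt_le, Rinv_0_lt_compat, INR_fact_lt_0.
    - apply Rmult_le_compat_l; [apply pow_le, M0|].
      apply pow_incr. split; [apply Rabs_pos|exact Ht].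
    - apply Rinv_le_contravar; [apply INR_fact_lt_0|]. apply le_INR, fact_le, Hj. }
  split; [|eapply Rle_trans; [exact Bdu|apply Bfact; lia]].
  eapply Rle_trans; [exact Bu|].
  change (Rabs t ^ S (2 * n)) with (Rabs t * Rabs t ^ (2 * n)).
  replace (M ^ n * (Rabs t * Rabs t ^ (2 * n)) / INR (fact (S (2 * n))))
    with (Rabs t * (M ^ n * Rabs t ^ (2 * n) / INR (fact (S (2 * n))))) by (unfold Rdiv; ring).
  apply Rmult_le_compat; [apply Rabs_pos| |exact Ht|apply Bfact; lia].
  apply Rmult_le_pos; [apply Rmult_le_pos; apply pow_le; [exact M0|apply Rabs_pos]|].
  apply Rlt_le, Rinv_0_lt_compat, INR_fact_lt_0.
Qed.

Lemma ex_series_picard x :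
  ex_series (fun n => picard_u n x) /\ ex_series (fun n => picard_du n x).
Proof.
  destruct (continuous_bounded_abs k (Rabs x) k_cont) as [M [M0 HM]].
  pose proof (picard_majorant (Rabs x) M (Rabs_pos x) M0 HM) as B.
  split.
  - apply (ex_series_le (K := R_AbsRing) (V := R_CompleteNormedModule) _
             (fun n => Rabs x * exp_term (M * Rabs x ^ 2) n)).
    + intros n. apply (B n x (Rle_refl _)).
    + apply (ex_series_scal_l (K := R_AbsRing) (V := R_NormedModule)), ex_series_exp_term.
  - apply (ex_series_le (K := R_AbsRing) (V := R_CompleteNormedModule) _
             (exp_term (M * Rabs x ^ 2))).
    + intros n. apply (B n x (Rle_refl _)).
    + apply ex_series_exp_term.
Qed.

Definition picard_sum t := Series (fun n => picard_u n t).
Definition picard_dsum t := Series (fun n => picard_du n t).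

Lemma is_derive_picard_sum t : is_derive picard_sum t (picard_dsum t).
Proof.
  assert (Hr : 0 < Rabs t + 1) by (pose proof (Rabs_pos t); lra).
  destruct (continuous_bounded_abs k (Rabs t + 1) k_cont) as [M [M0 HM]].
  pose proof (picard_majorant _ M (Rlt_le _ _ Hr) M0 HM) as B.
  apply (is_derive_Series _ _ (exp_term (M * (Rabs t + 1) ^ 2)) (mkposreal _ Hr)); simpl.
  - intros n y. apply is_derive_picard.
  - intros y. apply ex_series_picard.
  - apply ex_series_exp_term.
  - intros n y Hy. apply B. lra.
  - lra.
Qed.

Lemma is_derive_picard_dsum t : is_derive picard_dsum t (- k t * picard_sum t).
Proof.
  assert (Hr : 0 < Rabs t + 1) by (pose proof (Rabs_pos t); lra).
  destruct (continuous_bounded_abs k (Rabs t + 1) k_cont) as [M [M0 HM]].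
  pose proof (picard_majorant _ M (Rlt_le _ _ Hr) M0 HM) as B.
  assert (Series_ddu : Series (fun n => picard_ddu n t) = - k t * picard_sum t).
  { rewrite Series_incr_1.
    - simpl. unfold picard_sum. rewrite Rplus_0_l, <- Series_scal_l.
      apply Series_ext. intros n. ring.
    - apply ex_series_incr_1. simpl.
      apply (ex_series_ext (fun n => scal (- k t) (picard_u n t)));
        [intros n; symmetry; apply Ropp_mult_distr_l|].
      apply (ex_series_scal_l (K := R_AbsRing) (V := R_NormedModule)), ex_series_picard. }
  rewrite <- Series_ddu.
  apply (is_derive_Series _ _
           (fun n => match n with
                     | O => 0
                     | S m => M * ((Rabs t + 1) * exp_term (M * (Rabs t + 1) ^ 2) m)
                     end) (mkposreal _ Hr)); simpl.
  - intros n y. apply is_derive_picard.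
  - intros y. apply ex_series_picard.
  - apply ex_series_incr_1, (ex_series_scal_l (K := R_AbsRing) (V := R_NormedModule)).
    apply (ex_series_scal_l (K := R_AbsRing) (V := R_NormedModule)), ex_series_exp_term.
  - intros [|n] y Hy; simpl; [rewrite Rabs_R0; lra|].
    rewrite Rabs_Ropp, Rabs_mult. apply Rmult_le_compat; try apply Rabs_pos.
    + apply HM. lra.
    + apply B. lra.
  - lra.
Qed.

Lemma picard_sum_at0 : picard_sum 0 = 0 /\ picard_dsum 0 = 1.
Proof.
  unfold picard_sum, picard_dsum. split.
  - rewrite (Series_ext _ (fun n => 0 * picard_u n 0)), Series_scal_l; [ring|].
    intros n. rewrite (proj1 (picard_at0 n)). ring.
  - rewrite Series_incr_1 by apply ex_series_picard.
    rewrite (Series_ext _ (fun n => 0 * picard_du (S n) 0)), Series_scal_l.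
    + rewrite (proj2 (picard_at0 0)). ring.
    + intros n. rewrite (proj2 (picard_at0 (S n))). ring.
Qed.

End Picard.

(** * The index form *)

Lemma jacobi_exists (k : R -> R) a : (forall s, continuous k s) ->
  exists z z1 z2, jacobi_solution k z z1 z2 /\ z a = 0 /\ z1 a = 1.
Proof.
  intros Hk. set (ka := fun s => k (s + a)).
  assert (Hka : forall s, continuous ka s).
  { intros s. apply (continuous_comp (fun s => s + a) k); [|apply Hk].
    apply (continuous_plus (V := R_NormedModule) (fun s => s) (fun _ => a));
      [apply continuous_id|apply continuous_const]. }
  exists (fun t => picard_sum ka (t - a)), (fun t => picard_dsum ka (t - a)),
    (fun t => - k t * picard_sum ka (t - a)).
  split; [|rewrite Rminus_diag; exact (picard_sum_at0 ka Hka)].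
  intros t. split; [|split; [|ring]].
  - pose proof (is_derive_picard_sum ka Hka (t - a)). auto_derive_hyps. ring.
  - pose proof (is_derive_picard_dsum ka Hka (t - a)). auto_derive_hyps. unfold ka, Rminus.
    rewrite Rplus_assoc, Rplus_opp_l, Rplus_0_r. ring.
Qed.

Lemma RInt_jacobi_index (k z z1 z2 : R -> R) a b : (forall s, continuous k s) ->
  jacobi_solution k z z1 z2 ->
  RInt (fun s => z1 s ^ 2 - k s * z s ^ 2) a b = z b * z1 b - z a * z1 a.
Proof.
  intros Hk Hz. apply is_RInt_unique, (is_RInt_derive (fun s => z s * z1 s)).
  - intros s _. destruct (Hz s) as [Dz [Dz1 Ez]]. auto_derive_hyps.
    replace (z2 s) with (- k s * z s) by lra. ring.
  - intros s _. destruct (Hz s) as [Dz [Dz1 _]].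
    apply (continuous_minus (V := R_NormedModule)).
    + apply (continuous_of_is_derive _ s (2 * z2 s * z1 s)). auto_derive_hyps. ring.
    + apply (continuous_mult (K := R_AbsRing)); [apply Hk|].
      apply (continuous_of_is_derive _ s (2 * z1 s * z s)). auto_derive_hyps. ring.
Qed.

Definition disconjugate (k : R -> R) : Prop :=
  forall z z1 z2, jacobi_solution k z z1 z2 -> (exists t, z t <> 0) ->
  forall t1 t2, z t1 = 0 -> z t2 = 0 -> t1 = t2.

Definition index_form_positive (k : R -> R) : Prop :=
  forall T, 0 < T ->
  forall f n t g g1 g2, pw_C2_rep T f n t g g1 g2 -> f (- T) = 0 -> f T = 0 ->
  0 <= index_form k n t g g1 /\
  (index_form k n t g g1 = 0 <-> (forall x, - T <= x <= T -> f x = 0)).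

Lemma disconjugate_nonvanishing (k : R -> R) lo : (forall s, continuous k s) ->
  disconjugate k -> exists z z1 z2, jacobi_solution k z z1 z2 /\ forall x, lo <= x -> z x <> 0.
Proof.
  intros Hk Hdis. destruct (jacobi_exists k (lo - 1) Hk) as [z [z1 [z2 [Hz [za z1a]]]]].
  exists z, z1, z2. split; [exact Hz|]. intros x Hx zx.
  assert (nontrivial : exists t, z t <> 0).
  { apply not_all_not_ex. intros z0.
    assert (z1 (lo - 1) = 0); [|lra].
    apply (is_derive_eq0_open z (lo - 2) lo (lo - 1)); [|lra|apply Hz].
    intros y _. apply NNPP, z0. }
  pose proof (Hdis z z1 z2 Hz nontrivial x (lo - 1) zx za). lra.
Qed.

Lemma index_form_picone (k z z1 z2 : R -> R) T f n t (g g1 g2 : nat -> R -> R) :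
  (forall s, continuous k s) -> jacobi_solution k z z1 z2 ->
  (forall x, - T <= x <= T -> z x <> 0) ->
  pw_C2_rep T f n t g g1 g2 -> f (- T) = 0 -> f T = 0 ->
  index_form k n t g g1 =
  sum_lt n (fun i => RInt (picone_square z z1 (g i) (g1 i)) (t i) (t (S i))).
Proof.
  intros Hk Hz nz [_ [t0 [tn [incr [C2 Hf]]]]] fmT fT.
  pose proof (partition_bounded T n t t0 tn incr) as bounded.
  set (bdry := fun i => f (t i) ^ 2 * z1 (t i) / z (t i)).
  unfold index_form.
  rewrite (sum_lt_ext n _ (fun i => RInt (picone_square z z1 (g i) (g1 i)) (t i) (t (S i))
                                     + (bdry (S i) - bdry i))).
  - rewrite sum_lt_telescope. unfold bdry. rewrite tn, t0, fmT, fT. unfold Rdiv. ring.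
  - intros i Hi. pose proof (incr i Hi). pose proof (bounded i ltac:(lia)).
    pose proof (bounded (S i) ltac:(lia)).
    unfold bdry. rewrite (Hf i Hi (t i)), (Hf i Hi (t (S i))) by lra.
    apply (picone_identity k z z1 z2 (g i) (g1 i) (g2 i)); auto; [lra|].
    intros s Hs. apply nz. lra.
Qed.

Lemma index_form_eq0 k T f n t (g g1 g2 : nat -> R -> R) :
  pw_C2_rep T f n t g g1 g2 -> (forall x, - T <= x <= T -> f x = 0) -> index_form k n t g g1 = 0.
Proof.
  intros [_ [t0 [tn [incr [C2 Hf]]]]] f0.
  pose proof (partition_bounded T n t t0 tn incr) as bounded.
  unfold index_form. apply sum_lt_eq0. intros i Hi.
  pose proof (incr i Hi). pose proof (bounded i ltac:(lia)). pose proof (bounded (S i) ltac:(lia)).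
  assert (gi0 : forall y, t i < y < t (S i) -> g i y = 0).
  { intros y Hy. rewrite <- (Hf i Hi y) by lra. apply f0. lra. }
  rewrite (RInt_ext _ (fun _ => 0)).
  - rewrite RInt_const. apply Rmult_0_r.
  - rewrite Rmin_left, Rmax_right by lra. intros y Hy.
    rewrite gi0, (is_derive_eq0_open (g i) (t i) (t (S i)) y (g1 i y)); auto; [|apply C2; exact Hi].
    change (0 ^ 2 - k y * 0 ^ 2 = 0). ring.
Qed.

Section PiconePieces.

Variables (k z z1 z2 : R -> R) (T : R) (f : R -> R) (n : nat) (t : nat -> R)
  (g g1 g2 : nat -> R -> R).
Hypothesis z_sol : jacobi_solution k z z1 z2.
Hypothesis z_nz : forall x, - T <= x <= T -> z x <> 0.
Hypothesis f_rep : pw_C2_rep T f n t g g1 g2.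

Lemma RInt_picone_square_pieces_ge0 i : (i < n)%nat ->
  0 <= RInt (picone_square z z1 (g i) (g1 i)) (t i) (t (S i)).
Proof.
  destruct f_rep as [_ [t0 [tn [incr [C2 _]]]]]. intros Hi.
  pose proof (incr i Hi). pose proof (partition_bounded T n t t0 tn incr i ltac:(lia)).
  pose proof (partition_bounded T n t t0 tn incr (S i) ltac:(lia)).
  apply (RInt_picone_square_ge0 k z z1 z2 (g i) (g1 i) (g2 i)); auto; [lra|].
  intros s Hs. apply z_nz. lra.
Qed.

Lemma picone_square_pieces_eq0 : f (- T) = 0 ->
  (forall i, (i < n)%nat -> RInt (picone_square z z1 (g i) (g1 i)) (t i) (t (S i)) = 0) ->
  forall x, - T <= x <= T -> f x = 0.
Proof.
  destruct f_rep as [Hn [t0 [tn [incr [C2 Hf]]]]]. intros fmT A0.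
  pose proof (partition_bounded T n t t0 tn incr) as bounded.
  assert (piece : forall i, (i < n)%nat -> f (t i) = 0 -> forall x, t i <= x <= t (S i) -> f x = 0).
  { intros i Hi fi x Hx. pose proof (incr i Hi). pose proof (bounded i ltac:(lia)).
    pose proof (bounded (S i) ltac:(lia)). rewrite (Hf i Hi x Hx).
    apply (picone_square_eq0 k z z1 z2 (g i) (g1 i) (g2 i)) with (lo := t i) (hi := t (S i));
      auto; try lra.
    - intros s Hs. apply z_nz. lra.
    - rewrite <- (Hf i Hi) by lra. exact fi. }
  assert (pieces : forall i, (i < n)%nat -> forall x, t i <= x <= t (S i) -> f x = 0).
  { induction i as [|i IH]; intros Hi; apply piece; auto.
    - rewrite t0. exact fmT.
    - apply IH; [lia|]. pose proof (incr i ltac:(lia)). lra. }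
  intros x Hx. rewrite <- t0, <- tn in Hx.
  destruct (partition_cover n t incr Hn x Hx) as [i [Hi Hxi]].
  exact (pieces i Hi x Hxi).
Qed.

End PiconePieces.

Lemma disconjugate_index_form_positive (k : R -> R) : (forall s, continuous k s) ->
  disconjugate k -> index_form_positive k.
Proof.
  intros Hk Hdis T HT f n t g g1 g2 Hrep fmT fT.
  destruct (disconjugate_nonvanishing k (- T) Hk Hdis) as [z [z1 [z2 [Hz nz]]]].
  assert (nzT : forall x, - T <= x <= T -> z x <> 0) by (intros x Hx; apply nz; lra).
  pose proof (RInt_picone_square_pieces_ge0 k z z1 z2 T f n t g g1 g2 Hz nzT Hrep) as pieces_ge0.
  rewrite (index_form_picone k z z1 z2 T f n t g g1 g2 Hk Hz nzT Hrep fmT fT).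
  split; [apply sum_lt_ge0, pieces_ge0|split].
  - intros Hsum. apply (picone_square_pieces_eq0 k z z1 z2 T f n t g g1 g2 Hz nzT Hrep fmT).
    exact (sum_lt_eq0_ge0 n _ pieces_ge0 Hsum).
  - intros f0. rewrite <- (index_form_picone k z z1 z2 T f n t g g1 g2 Hk Hz nzT Hrep fmT fT).
    exact (index_form_eq0 k T f n t g g1 g2 Hrep f0).
Qed.

Definition three_nodes (T t1 t2 : R) (i : nat) : R :=
  match i with 0%nat => - T | 1%nat => t1 | 2%nat => t2 | _ => T end.

Definition middle_piece (h : R -> R) (i : nat) : R -> R :=
  match i with 1%nat => h | _ => fun _ => 0 end.

Definition truncate (z : R -> R) (t1 t2 x : R) : R :=
  if Rle_dec t1 x then if Rle_dec x t2 then z x else 0 else 0.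

Lemma pw_C2_rep_truncate (k z z1 z2 : R -> R) T t1 t2 : (forall s, continuous k s) ->
  jacobi_solution k z z1 z2 -> z t1 = 0 -> z t2 = 0 -> - T < t1 < t2 -> t2 < T ->
  pw_C2_rep T (truncate z t1 t2) 3 (three_nodes T t1 t2)
    (middle_piece z) (middle_piece z1) (middle_piece z2).
Proof.
  intros Hk Hz Z1 Z2 Ht12 HtT.
  split; [lia|split; [reflexivity|split; [reflexivity|split; [|split]]]].
  - intros [|[|[|i]]] Hi; simpl; lra || lia.
  - assert (C2_zero : C2_with (fun _ => 0) (fun _ => 0) (fun _ => 0)).
    { intros x. split; [|split]; [exact (is_derive_const (K := R_AbsRing) 0 x)..|].
      apply continuous_const. }
    intros [|[|[|i]]] Hi; simpl; try lia; try exact C2_zero.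
    intros x. destruct (Hz x) as [Dz [Dz1 _]]. split; [exact Dz|split; [exact Dz1|]].
    apply (continuous_ext (fun s => - k s * z s)); [intros s; destruct (Hz s) as [_ [_ Ez]]; lra|].
    apply (continuous_mult (K := R_AbsRing)); [|exact (continuous_of_is_derive _ _ _ Dz)].
    apply (continuous_opp (V := R_NormedModule)), Hk.
  - intros [|[|[|i]]] Hi x Hx; simpl in Hx |- *; unfold truncate; try lia;
      destruct (Rle_dec t1 x); destruct (Rle_dec x t2); try lra; try reflexivity;
      first [replace x with t1 by lra | replace x with t2 by lra]; assumption.
Qed.

Lemma index_form_truncate (k z z1 z2 : R -> R) T t1 t2 : (forall s, continuous k s) ->
  jacobi_solution k z z1 z2 -> z t1 = 0 -> z t2 = 0 ->
  index_form k 3 (three_nodes T t1 t2) (middle_piece z) (middle_piece z1) = 0.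
Proof.
  intros Hk Hz Z1 Z2. unfold index_form, sum_lt, three_nodes, middle_piece.
  rewrite (RInt_jacobi_index k z z1 z2 t1 t2 Hk Hz), Z1, Z2.
  rewrite !(RInt_ext (fun s => 0 ^ 2 - k s * 0 ^ 2) (fun _ => 0)) by (intros; simpl; ring).
  rewrite !RInt_const. simpl. unfold scal; simpl; unfold mult; simpl. ring.
Qed.

Lemma index_form_positive_jacobi_eq0 (k z z1 z2 : R -> R) t1 t2 :
  (forall s, continuous k s) -> index_form_positive k -> jacobi_solution k z z1 z2 ->
  z t1 = 0 -> z t2 = 0 -> t1 < t2 -> forall t, z t = 0.
Proof.
  intros Hk Hpos Hz Z1 Z2 H12.
  set (T := Rabs t1 + Rabs t2 + 1).
  assert (HT : - T < t1 /\ t2 < T).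
  { unfold T. pose proof (Rle_abs t2). pose proof (Rle_abs (- t1)). rewrite Rabs_Ropp in *.
    pose proof (Rabs_pos t1). pose proof (Rabs_pos t2). lra. }
  assert (truncate_ends : truncate z t1 t2 (- T) = 0 /\ truncate z t1 t2 T = 0).
  { unfold truncate.
    split; destruct (Rle_dec t1 _); try reflexivity; destruct (Rle_dec _ t2); lra. }
  destruct (Hpos T ltac:(lra) _ _ _ _ _ _ (pw_C2_rep_truncate k z z1 z2 T t1 t2 Hk Hz Z1 Z2
             ltac:(lra) ltac:(lra)) (proj1 truncate_ends) (proj2 truncate_ends)) as [_ [trunc0 _]].
  assert (z_open : forall y, t1 < y < t2 -> z y = 0).
  { intros y Hy.
    pose proof (trunc0 (index_form_truncate k z z1 z2 T t1 t2 Hk Hz Z1 Z2) y ltac:(lra)) as zy.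
    unfold truncate in zy. destruct (Rle_dec t1 y); destruct (Rle_dec y t2); lra. }
  set (m := (t1 + t2) / 2).
  assert (Hm : t1 < m < t2) by (unfold m; lra).
  apply (jacobi_solution_eq0 k z z1 z2 m Hk Hz); [apply z_open, Hm|].
  apply (is_derive_eq0_open z t1 t2 m); [exact z_open|exact Hm|apply Hz].
Qed.

Lemma index_form_positive_disconjugate (k : R -> R) : (forall s, continuous k s) ->
  index_form_positive k -> disconjugate k.
Proof.
  intros Hk Hpos z z1 z2 Hz [t0 Ht0] t1 t2 Z1 Z2.
  destruct (Rtotal_order t1 t2) as [H12|[H12|H12]]; [exfalso| exact H12 |exfalso]; apply Ht0.
  - exact (index_form_positive_jacobi_eq0 k z z1 z2 t1 t2 Hk Hpos Hz Z1 Z2 H12 t0).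
  - exact (index_form_positive_jacobi_eq0 k z z1 z2 t2 t1 Hk Hpos Hz Z2 Z1 H12 t0).
Qed.

Theorem lemma2p4 (SM : Type) (kappa : SM -> R -> R)
  (Hk : forall v s, continuous (kappa v) s) :
  no_conjugate_points kappa <->
  (forall (v : SM) (T : R), 0 < T ->
   forall (f : R -> R) (n : nat) (t : nat -> R) (g g1 g2 : nat -> R -> R),
   pw_C2_rep T f n t g g1 g2 -> f (- T) = 0 -> f T = 0 ->
   0 <= index_form (kappa v) n t g g1 /\
   (index_form (kappa v) n t g g1 = 0 <-> (forall x, - T <= x <= T -> f x = 0))).
Proof.
  split.
  - intros Hdis v. exact (disconjugate_index_form_positive (kappa v) (Hk v) (Hdis v)).
  - intros Hpos v. exact (index_form_positive_disconjugate (kappa v) (Hk v) (Hpos v)).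
Qed.
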